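(* Let $A=\{\mathbf{a}_1,\dots,\mathbf{a}_n\}\subseteq\mathbb{R}^d$ with hidden partition $\mathcal{V}=\{V_1,\dots,V_K\}$, and let $N_1:=\sum_{\alpha=1}^K\binom{n_\alpha}{2}$, $N_2:=\binom{K+1}{2}$. Let $0<\epsilon<1$, $p>1$, $\delta:=(N_1+N_2)^{-p}$, and let $\Pi\in\mathbb{R}^{m\times d}$ be drawn from a DJL distribution $\mathcal{D}_{\epsilon,\delta}$. Let $E_1$ be the event that $(1-\epsilon)\|\mathbf{a}_i-\mathbf{a}_j\|^2\le\|\Pi(\mathbf{a}_i-\mathbf{a}_j)\|^2\le(1+\epsilon)\|\mathbf{a}_i-\mathbf{a}_j\|^2$ for all $\mathbf{a}_i,\mathbf{a}_j\in V_\alpha$, $1\le\alpha\le K$, and $E_2$ the event that $(1-\epsilon)\|\mathbf{a}^{(\alpha)}-\mathbf{a}^{(\beta)}\|^2\le\|\Pi(\mathbf{a}^{(\alpha)}-\mathbf{a}^{(\beta)})\|^2\le(1+\epsilon)\|\mathbf{a}^{(\alpha)}-\mathbf{a}^{(\beta)}\|^2$ for all $1\le\alpha\ne\beta\le K$. Then $\mathbb{P}[E_2\mid E_1]\ge 1-\frac{N_2}{(N_1+N_2)^p-N_1}$. If moreover $N_2\le n/2$ and $\delta=2/n^{p+1}$ (with $\Pi$ drawn from $\mathcal{D}_{\epsilon,\delta}$ for this $\delta$), then $\mathbb{P}[E_2\mid E_1]\ge 1-\frac{1}{n^p-n+1}$.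
   Context: $\|\cdot\|$ is the Euclidean norm. $I_\alpha:=\{i:\mathbf{a}_i\in V_\alpha\}$, $n_\alpha:=|I_\alpha|$, $\mathbf{a}^{(\alpha)}:=\frac{1}{n_\alpha}\sum_{i\in I_\alpha}\mathbf{a}_i$. For $\epsilon\in(0,1)$, $\delta\in(0,1)$, a DJL distribution $\mathcal{D}_{\epsilon,\delta}$ is a probability distribution over matrices $\Pi\in\mathbb{R}^{m\times d}$ such that for every $z\in\mathbb{R}^d$ with $\|z\|=1$, $\mathbb{P}_{\Pi\sim\mathcal{D}_{\epsilon,\delta}}[\,|\|\Pi z\|^2-1|>\epsilon\,]<\delta$. *)

From HB Require Import structures.
From mathcomp Require Import all_boot all_order all_algebra.
From mathcomp Require Import all_classical all_reals.
From mathcomp Require Import ereal topology normedtype exp measure lebesgue_measure probability.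
Set Implicit Arguments. Unset Strict Implicit. Unset Printing Implicit Defensive.
Import Order.TTheory GRing.Theory Num.Theory.
Local Open Scope ring_scope.
Local Open Scope classical_set_scope.

Definition sqnorm (R : realType) (k : nat) (v : 'cV[R]_k) : R :=
  \sum_(i < k) (v i 0) ^+ 2.

(* index set I_alpha and its size n_alpha, for a labelling lab : 'I_n -> 'I_K
   encoding the hidden partition (a_i \in V_alpha  iff  lab i = alpha) *)
Definition part_size (n K : nat) (lab : 'I_n -> 'I_K) (al : 'I_K) : nat :=
  #|[set i | lab i == al]|.

Definition centroid (R : realType) (d n K : nat) (a : 'I_n -> 'cV[R]_d)
  (lab : 'I_n -> 'I_K) (al : 'I_K) : 'cV[R]_d :=
  (part_size lab al)%:R^-1 *: \sum_(i < n | lab i == al) a i.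

Definition N1 (n K : nat) (lab : 'I_n -> 'I_K) : nat :=
  \sum_(al < K) 'C(part_size lab al, 2).
Definition N2 (K : nat) : nat := 'C(K.+1, 2).

(* Pi : T -> 'M_(m,d) is a random matrix on the probability space (T,P)
   (measurability of w |-> ||Pi w z||^2 for every z) whose law is a DJL
   distribution D_{eps,delta}. *)
Definition isDJL (R : realType) (dT : measure_display) (T : measurableType dT)
  (P : probability T R) (m d : nat) (Pi : T -> 'M[R]_(m, d)) (eps delta : R) : Prop :=
  [/\ 0 < eps < 1, 0 < delta < 1,
      (forall z : 'cV[R]_d, measurable_fun setT (fun w => sqnorm (Pi w *m z)))
    & forall z : 'cV[R]_d, sqnorm z = 1 ->
        (P [set w | (`| sqnorm (Pi w *m z) - 1 | > eps)%R] < delta%:E)%E].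

Definition condprob (R : realType) (dT : measure_display) (T : measurableType dT)
  (P : probability T R) (A B : set T) : R :=
  fine (P (A `&` B)) / fine (P B).

Definition eps_iso (R : realType) (m d : nat) (M : 'M[R]_(m, d)) (eps : R)
  (v : 'cV[R]_d) : Prop :=
  (1 - eps) * sqnorm v <= sqnorm (M *m v) <= (1 + eps) * sqnorm v.

Definition event_E1 (R : realType) (T : Type) (m d n K : nat)
  (a : 'I_n -> 'cV[R]_d) (lab : 'I_n -> 'I_K) (Pi : T -> 'M[R]_(m, d)) (eps : R)
  : set T :=
  [set w | forall i j : 'I_n, lab i = lab j -> eps_iso (Pi w) eps (a i - a j)].

Definition event_E2 (R : realType) (T : Type) (m d n K : nat)
  (a : 'I_n -> 'cV[R]_d) (lab : 'I_n -> 'I_K) (Pi : T -> 'M[R]_(m, d)) (eps : R)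
  : set T :=
  [set w | forall al be : 'I_K, al != be ->
     eps_iso (Pi w) eps (centroid a lab al - centroid a lab be)].

(* Each pair of points within a cluster, and each pair of distinct centroids, is a
   single vector whose squared norm Pi distorts by more than eps with probability
   below delta.  The union bound gives P(~E1) <= N1 delta and
   P(~E2) <= C(K, 2) delta <= N2 delta; since P(E2 /\ E1) >= P(E1) - P(~E2),
   P[E2 | E1] >= 1 - N2 delta / (1 - N1 delta).  Both bounds are this inequality
   evaluated at the two choices of delta, using N1 <= C(n, 2) for the second. *)

From HB Require Import structures.
From mathcomp Require Import all_boot all_order all_algebra.
From mathcomp Require Import all_classical all_reals.
From mathcomp Require Import ereal topology normedtype exp measure lebesgue_measure probability.
From mathcomp Require Import zify ring lra.
Import Order.TTheory GRing.Theory Num.Theory.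
Local Open Scope ring_scope.
Local Open Scope classical_set_scope.
Set Implicit Arguments. Unset Strict Implicit.

Section real_probability.
Context {R : realType} {dT : measure_display} {T : measurableType dT}.
Variable P : probability T R.

Definition Pr (A : set T) : R := fine (P A).

Lemma PrE A : measurable A -> P A = (Pr A)%:E.
Proof. by move=> mA; rewrite /Pr fineK // fin_num_measure. Qed.

Lemma Pr_ge0 A : 0 <= Pr A.
Proof. exact/fine_ge0/measure_ge0. Qed.

Lemma le_Pr A B : measurable A -> measurable B -> A `<=` B -> Pr A <= Pr B.
Proof. by move=> mA mB AB; rewrite -lee_fin -!PrE // le_measure // inE. Qed.

Lemma PrU_le A B : measurable A -> measurable B -> Pr (A `|` B) <= Pr A + Pr B.
Proof.
by move=> mA mB; rewrite -lee_fin EFinD -!PrE ?measureU2 //; exact: measurableU.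
Qed.

Lemma PrC A : measurable A -> Pr (~` A) = 1 - Pr A.
Proof.
move=> mA; apply: EFin_inj.
by rewrite EFinB -!PrE ?probability_setC //; exact: measurableC.
Qed.

Lemma Pr_bigsetU_le (I : finType) (S : {set I}) (F : I -> set T) (delta : R) :
  (forall i, i \in S -> measurable (F i) /\ Pr (F i) <= delta) ->
  Pr (\big[setU/set0]_(i in S) F i) <= #|S|%:R * delta.
Proof.
move=> Fle; rewrite mulr_natl -sumr_const.
suff [] : measurable (\big[setU/set0]_(i in S) F i) /\
          Pr (\big[setU/set0]_(i in S) F i) <= \sum_(i in S) delta by [].
apply: (big_ind2 (fun U s => measurable U /\ Pr U <= s)) => //.
- by rewrite /Pr measure0.
- move=> U1 s1 U2 s2 [mU1 le1] [mU2 le2]; split; first exact: measurableU.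
  exact: le_trans (PrU_le mU1 mU2) (lerD le1 le2).
Qed.

Lemma condprob_ge A B b1 b2 : measurable A -> measurable B ->
  Pr (~` B) <= b1 -> b1 < 1 -> Pr (~` A) <= b2 ->
  1 - b2 / (1 - b1) <= condprob P A B.
Proof.
move=> mA mB notB_le b1_lt1 notA_le.
have mAB : measurable (A `&` B) by exact: measurableI.
have mnA : measurable (~` A) by exact: measurableC.
have PrB_ge : 1 - b1 <= Pr B by move: notB_le; rewrite PrC //; lra.
have PrB_gt0 : 0 < Pr B by lra.
have PrAB_ge : Pr B - b2 <= Pr (A `&` B).
  have B_sub : B `<=` (A `&` B) `|` ~` A.
    by move=> w Bw; have [Aw|nAw] := pselect (A w); [left | right].
  have := le_Pr mB (measurableU _ _ mAB mnA) B_sub.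
  have := PrU_le mAB mnA; lra.
have b2_ge0 : 0 <= b2 := le_trans (Pr_ge0 _) notA_le.
rewrite /condprob -/(Pr _) -/(Pr _) ler_pdivlMr // mulrBl mul1r.
suff : b2 <= b2 / (1 - b1) * Pr B by lra.
by rewrite -mulrA ler_peMr // mulrC ler_pdivlMr ?mul1r //; lra.
Qed.
End real_probability.

Section eps_isometry.
Context {R : realType}.

Lemma sqnorm_ge0 k (v : 'cV[R]_k) : 0 <= sqnorm v.
Proof. by apply: sumr_ge0 => i _; exact: sqr_ge0. Qed.

Lemma sqnormZ k c (v : 'cV[R]_k) : sqnorm (c *: v) = c ^+ 2 * sqnorm v.
Proof. by rewrite /sqnorm mulr_sumr; apply: eq_bigr => i _; rewrite mxE exprMn. Qed.

Lemma sqnorm0 k : sqnorm (0 : 'cV[R]_k) = 0.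
Proof. by rewrite /sqnorm big1 // => i _; rewrite mxE expr0n. Qed.

Lemma sqnorm_eq0 k (v : 'cV[R]_k) : (sqnorm v == 0) = (v == 0).
Proof.
apply/idP/eqP => [|->]; last by rewrite sqnorm0.
rewrite psumr_eq0 => [/allP v0|i _]; last exact: sqr_ge0.
apply/matrixP => i j; rewrite ord1 mxE.
by apply/eqP; rewrite -sqrf_eq0; exact: v0 (mem_index_enum _).
Qed.

Lemma sqnormN k (v : 'cV[R]_k) : sqnorm (- v) = sqnorm v.
Proof. by rewrite -scaleN1r sqnormZ sqrrN expr1n mul1r. Qed.

Context {m d : nat}.
Implicit Types (M : 'M[R]_(m, d)) (e c : R) (v z : 'cV[R]_d).

Lemma eps_iso0 M e : eps_iso M e 0.
Proof. by rewrite /eps_iso mulmx0 !sqnorm0 !mulr0 lexx. Qed.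

Lemma eps_isoN M e v : eps_iso M e (- v) <-> eps_iso M e v.
Proof. by rewrite /eps_iso mulmxN !sqnormN. Qed.

Lemma eps_isoZ M e c v : c != 0 -> eps_iso M e (c *: v) <-> eps_iso M e v.
Proof.
move=> c0; have c2_gt0 : 0 < c ^+ 2 by rewrite exprn_even_gt0.
rewrite /eps_iso -scalemxAr !sqnormZ.
by rewrite [(1 - e) * _]mulrCA [(1 + e) * _]mulrCA !ler_pM2l.
Qed.

Lemma eps_iso_unit M e z : sqnorm z = 1 ->
  eps_iso M e z <-> `|sqnorm (M *m z) - 1| <= e.
Proof. by move=> z1; rewrite /eps_iso z1 !mulr1 ler_distl. Qed.

Lemma eps_iso_diffs_ltn M e k (v : 'I_k -> 'cV[R]_d) (r : 'I_k -> 'I_k -> Prop) :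
  (forall i j, r i j -> r j i) ->
  (forall i j : 'I_k, (i < j)%N -> r i j -> eps_iso M e (v i - v j)) ->
  forall i j, r i j -> eps_iso M e (v i - v j).
Proof.
move=> r_sym iso_lt i j rij; have [ij|ji|/val_inj ->] := ltngtP i j.
- exact: iso_lt.
- by apply/eps_isoN; rewrite opprB; exact: iso_lt (r_sym _ _ rij).
- by rewrite subrr; exact: eps_iso0.
Qed.
End eps_isometry.

Lemma setC_forall_in (T : Type) (I : finType) (S : {set I}) (G : I -> set T) :
  ~` [set w | forall i, i \in S -> G i w] = \big[setU/set0]_(i in S) ~` G i.
Proof.
rewrite -setC_bigsetI -bigcap_seq_cond; congr (~` _).
apply/seteqP; split => w /= Gw i; first by case/andP => _; exact: Gw.
by move=> iS; apply: Gw; rewrite /= mem_index_enum.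
Qed.

Section djl_events.
Context {R : realType} {dT : measure_display} {T : measurableType dT}.
Variables (P : probability T R) (m d : nat) (Pi : T -> 'M[R]_(m, d)) (e delta : R).
Hypothesis PiDJL : isDJL P Pi e delta.

Lemma measurable_eps_iso v : measurable [set w | eps_iso (Pi w) e v].
Proof.
have [_ _ mPi _] := PiDJL.
have := mPi v measurableT _
  (measurable_itv `[(1 - e) * sqnorm v, (1 + e) * sqnorm v]%O).
by rewrite setTI; congr measurable; apply/seteqP; split => w; rewrite /= in_itv.
Qed.

Lemma Pr_not_eps_iso v : Pr P (~` [set w | eps_iso (Pi w) e v]) <= delta.
Proof.
have [_ /andP[delta_gt0 _] _ DJL_tail] := PiDJL.
have [->|v0] := eqVneq v 0.
  suff -> : ~` [set w | eps_iso (Pi w) e 0] = set0 by rewrite /Pr measure0 ltW.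
  by apply/seteqP; split => // w /=; apply; exact: eps_iso0.
have sv_gt0 : 0 < sqnorm v by rewrite lt0r sqnorm_eq0 v0 sqnorm_ge0.
have c0 : (Num.sqrt (sqnorm v))^-1 != 0 by rewrite invr_eq0 sqrtr_eq0 -ltNge.
pose z := (Num.sqrt (sqnorm v))^-1 *: v.
have z1 : sqnorm z = 1 by rewrite sqnormZ exprVn sqr_sqrtr ?mulVf ?gt_eqF // ltW.
have iso_vE w : eps_iso (Pi w) e v <-> `|sqnorm (Pi w *m z) - 1| <= e.
  exact: iff_trans (iff_sym (eps_isoZ _ _ _ c0)) (eps_iso_unit _ _ z1).
have bad_eq :
    ~` [set w | eps_iso (Pi w) e v] = [set w | e < `|sqnorm (Pi w *m z) - 1|].
  apply/seteqP; split => w /=; rewrite ltNge.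
  - by move=> not_iso; apply/negP => /iso_vE.
  - by move/negP => not_le /iso_vE.
have m_bad := measurableC (measurable_eps_iso v).
by rewrite -lee_fin -(PrE _ m_bad) bad_eq; exact/ltW/DJL_tail.
Qed.

Lemma measurable_forall_eps_iso (I : finType) (S : {set I}) (v : I -> 'cV[R]_d) :
  measurable [set w | forall i, i \in S -> eps_iso (Pi w) e (v i)].
Proof.
rewrite -[X in measurable X]setCK setC_forall_in; apply: measurableC.
by apply: bigsetU_measurable => i _; exact/measurableC/measurable_eps_iso.
Qed.

Lemma Pr_not_forall_eps_iso (I : finType) (S : {set I}) (v : I -> 'cV[R]_d) :
  Pr P (~` [set w | forall i, i \in S -> eps_iso (Pi w) e (v i)]) <= #|S|%:R * delta.
Proof.
rewrite setC_forall_in; apply: Pr_bigsetU_le => i _.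
by split; [exact/measurableC/measurable_eps_iso | exact: Pr_not_eps_iso].
Qed.
End djl_events.

Definition ltn_pairs k (A : {set 'I_k}) : {set 'I_k * 'I_k} :=
  [set ij : 'I_k * 'I_k | [&& (ij.1 < ij.2)%N, ij.1 \in A & ij.2 \in A]]%SET.

Lemma card_ltn_pairs k (A : {set 'I_k}) : #|ltn_pairs A| = 'C(#|A|, 2).
Proof.
rewrite -cards_draws -(card_in_imset (f := fun ij => [set ij.1; ij.2]%SET)).
  apply: eq_card => B; rewrite [RHS]inE.
  apply/imsetP/andP => [[[i j]] /[!inE] /and3P[ij iA jA] ->|].
    by rewrite finset.subUset !finset.sub1set iA jA cards2 neq_ltn ij.
  case=> BA /cards2P[x [y [xy BE]]].
  have [xA yA] : x \in A /\ y \in A.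
    by apply/andP; rewrite -!finset.sub1set -finset.subUset -BE.
  have [xy_lt|yx_lt|/val_inj xy_eq] := ltngtP x y; last by rewrite xy_eq eqxx in xy.
  - by exists (x, y); rewrite // inE /= xy_lt xA yA.
  - by exists (y, x); rewrite ?inE /= ?yx_lt ?xA ?yA // BE finset.setUC.
move=> [i j] [i' j'] /[!inE] /and3P[/= ij _ _] /and3P[/= ij' _ _] /= eq2.
have memE x : (x \in [set i; j]%SET) = (x \in [set i'; j']%SET) by rewrite eq2.
move: (memE i) (memE j) (memE i'); rewrite !inE !eqxx /= ?orbT.
rewrite -!(inj_eq (@ord_inj k)) => ? ? ?; congr (_, _); apply: ord_inj; lia.
Qed.

Definition class_pairs n K (lab : 'I_n -> 'I_K) : {set 'I_n * 'I_n} :=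
  [set ij : 'I_n * 'I_n | (ij.1 < ij.2)%N && (lab ij.1 == lab ij.2)]%SET.

Lemma part_sizeE n K (lab : 'I_n -> 'I_K) al :
  part_size lab al = #|[set i | lab i == al]%SET|.
Proof. by apply: eq_card => i; rewrite !inE /in_set /=; exact: asboolb. Qed.

Lemma card_class_pairs n K (lab : 'I_n -> 'I_K) : #|class_pairs lab| = N1 lab.
Proof.
rewrite -sum1_card (partition_big (fun ij => lab ij.1) xpredT) //=.
apply: eq_bigr => al _; rewrite part_sizeE -card_ltn_pairs -sum1_card.
apply: eq_bigl => -[i j]; rewrite !inE /=.
have [<-|_] := eqVneq (lab i) al; last by rewrite andbF andFb andbF.
by rewrite andbT eq_sym.
Qed.

Lemma N1_le_bin2 n K (lab : 'I_n -> 'I_K) : (N1 lab <= 'C(n, 2))%N.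
Proof.
rewrite -card_class_pairs -[n in 'C(n, 2)]card_ord -cardsT -card_ltn_pairs.
by apply/subset_leq_card/fintype.subsetP => -[i j]; rewrite !inE /= => /andP[->].
Qed.

Lemma bin2_le_N2 K : ('C(K, 2) <= N2 K)%N.
Proof. by rewrite /N2 binS bin1 leq_addr. Qed.

Section hidden_partition.
Context {R : realType} {dT : measure_display} {T : measurableType dT}.
Variables (P : probability T R) (m d n K : nat).
Variables (a : 'I_n -> 'cV[R]_d) (lab : 'I_n -> 'I_K) (Pi : T -> 'M[R]_(m, d)) (e : R).

Lemma event_E1E : event_E1 a lab Pi e =
  [set w | forall ij, ij \in class_pairs lab -> eps_iso (Pi w) e (a ij.1 - a ij.2)].
Proof.
apply/seteqP; split => w /= iso_w.
  by move=> [i j] /[!inE] /andP[_ /eqP]; exact: iso_w.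
apply: (eps_iso_diffs_ltn (r := fun i j => lab i = lab j)) => [i j -> //|i j ij lab_ij].
by apply: (iso_w (i, j)); rewrite inE ij lab_ij /=.
Qed.

Lemma event_E2E : event_E2 a lab Pi e =
  [set w | forall ab, ab \in ltn_pairs [set: 'I_K]%SET ->
     eps_iso (Pi w) e (centroid a lab ab.1 - centroid a lab ab.2)].
Proof.
apply/seteqP; split => w /= iso_w.
  by move=> [al be] /[!inE] /andP[/= al_be _]; apply: iso_w; rewrite neq_ltn al_be.
apply: (eps_iso_diffs_ltn (r := fun al be => al != be)) => [al be|al be al_be _].
  by rewrite eq_sym.
by apply: (iso_w (al, be)); rewrite !inE al_be.
Qed.

Lemma condprob_E2_E1_ge delta b1 b2 : isDJL P Pi e delta ->
  (N1 lab)%:R * delta <= b1 -> b1 < 1 -> 'C(K, 2)%:R * delta <= b2 ->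
  1 - b2 / (1 - b1) <= condprob P (event_E2 a lab Pi e) (event_E1 a lab Pi e).
Proof.
move=> PiDJL N1_le b1_lt1 CK_le; rewrite event_E1E event_E2E.
apply: (condprob_ge (measurable_forall_eps_iso PiDJL _ _)
                   (measurable_forall_eps_iso PiDJL _ _) _ b1_lt1).
- rewrite -card_class_pairs in N1_le.
  exact: le_trans (Pr_not_forall_eps_iso PiDJL _ _) N1_le.
- rewrite -[X in 'C(X, 2)]card_ord -cardsT -card_ltn_pairs in CK_le.
  exact: le_trans (Pr_not_forall_eps_iso PiDJL _ _) CK_le.
Qed.

Lemma condprob_E2_E1_ge_pow p : (0 < K)%N -> 1 < p ->
  isDJL P Pi e (((N1 lab + N2 K)%N)%:R `^ (- p)) ->
  1 - (N2 K)%:R / (((N1 lab + N2 K)%N)%:R `^ p - (N1 lab)%:R)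
    <= condprob P (event_E2 a lab Pi e) (event_E1 a lab Pi e).
Proof.
move=> K_gt0 p_gt1; set X : R := ((N1 lab + N2 K)%N)%:R; set Y := X `^ p.
rewrite powRN -/Y => PiDJL.
have N2_gt0 : (0 < N2 K)%N by rewrite bin_gt0 ltnS.
have X_ge1 : 1 <= X by rewrite ler1n addn_gt0 N2_gt0 orbT.
have X_le_Y : X <= Y.
  by rewrite -{1}(powRr1 (le_trans ler01 X_ge1)); apply: ler_powR => //; lra.
have N1_lt_X : (N1 lab)%:R < X by rewrite ltr_nat -addn1 leq_add2l.
have N1_ge0 : 0 <= (N1 lab)%:R :> R by [].
have -> : (N2 K)%:R / (Y - (N1 lab)%:R)
          = (N2 K)%:R * Y^-1 / (1 - (N1 lab)%:R * Y^-1).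
  by field; apply/andP; split; apply/eqP; lra.
apply: condprob_E2_E1_ge PiDJL _ _ _ => //.
- by rewrite ltr_pdivrMr ?mul1r //; lra.
- by rewrite ler_wpM2r ?invr_ge0 ?ler_nat ?bin2_le_N2 //; lra.
Qed.

Lemma condprob_E2_E1_ge_n p : (0 < n)%N -> 1 < p -> (N2 K)%:R <= n%:R / 2 :> R ->
  isDJL P Pi e (2 / n%:R `^ (p + 1)) ->
  1 - 1 / (n%:R `^ p - n%:R + 1)
    <= condprob P (event_E2 a lab Pi e) (event_E1 a lab Pi e).
Proof.
move=> n_gt0 p_gt1 N2_le; set x := n%:R : R; set Y := x `^ p.
have x_ge1 : 1 <= x by rewrite ler1n.
have x_le_Y : x <= Y.
  by rewrite -{1}(powRr1 (le_trans ler01 x_ge1)); apply: ler_powR => //; lra.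
have x_gt0 : 0 < x by lra.
rewrite powRD ?powRr1 -/Y; [|exact: ltW|by rewrite (gt_eqF x_gt0) implybT].
set delta := 2 / (Y * x) => PiDJL.
have delta_ge0 : 0 <= delta by rewrite divr_ge0 ?mulr_ge0 //; lra.
have bin2_n : 'C(n, 2)%:R = x * (x - 1) / 2 :> R.
  have := mul_bin_diag n 1; rewrite bin1 -subn1 => /(congr1 (fun k => k%:R : R)).
  by rewrite !natrM natrB // -/x => nE; rewrite nE; field.
have -> : 1 / (Y - x + 1) = x / 2 * delta / (1 - 'C(n, 2)%:R * delta).
  by rewrite bin2_n /delta; field; apply/and3P; split; apply/eqP; lra.
apply: condprob_E2_E1_ge PiDJL _ _ _.
- by rewrite ler_wpM2r // ler_nat N1_le_bin2.
- have -> : 'C(n, 2)%:R * delta = (x - 1) / Y.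
    by rewrite bin2_n /delta; field; apply/andP; split; apply/eqP; lra.
  by rewrite ltr_pdivrMr ?mul1r //; lra.
- rewrite ler_wpM2r // (le_trans _ N2_le) // ler_nat; exact: bin2_le_N2.
Qed.
End hidden_partition.

Theorem proposition7 (R : realType) (dT : measure_display) (T : measurableType dT)
  (P : probability T R) (m d n K : nat) (a : 'I_n -> 'cV[R]_d)
  (lab : 'I_n -> 'I_K) (eps p : R) :
  (0 < K)%N -> (forall al : 'I_K, exists i : 'I_n, lab i = al) ->
  0 < eps < 1 -> 1 < p ->
  (forall Pi : T -> 'M[R]_(m, d),
     isDJL P Pi eps (((N1 lab + N2 K)%N)%:R `^ (- p)) ->
     condprob P (event_E2 a lab Pi eps) (event_E1 a lab Pi eps)
       >= 1 - (N2 K)%:R / (((N1 lab + N2 K)%N)%:R `^ p - (N1 lab)%:R))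
  /\
  ((N2 K)%:R <= n%:R / 2 :> R ->
   forall Pi : T -> 'M[R]_(m, d),
     isDJL P Pi eps (2 / n%:R `^ (p + 1)) ->
     condprob P (event_E2 a lab Pi eps) (event_E1 a lab Pi eps)
       >= 1 - 1 / (n%:R `^ p - n%:R + 1)).
Proof.
move=> K_gt0 lab_onto _ p_gt1; split => [Pi|N2_le Pi].
  exact: condprob_E2_E1_ge_pow K_gt0 p_gt1.
have [i _] := lab_onto (Ordinal K_gt0).
exact: condprob_E2_E1_ge_n (leq_ltn_trans (leq0n i) (ltn_ord i)) p_gt1 N2_le.
Qed.
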